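(* Let $Q$ be a quiver, $\mathcal A=\Lambda Q/\langle P_1,\dots,P_K\rangle$ a completed path algebra with relations, $G$ a finite group with a formal dual group action $\mathfrak f$ on $\mathcal A$, and $W\in\mathcal A$ invariant under the formal dual group action. Let $\hat{\mathcal A}=\Lambda(Q\# G)/\langle P_i^g: g\in G,\ i=1,\dots,K\rangle$ and $\hat W=\sum_{g\in G}W^g$. If $W$ is a central element of $\mathcal A$, then $\hat W$ is a central element of $\hat{\mathcal A}$.
   Context: Paths are written right to left ($x_p\cdots x_1$ means first $x_1$). A formal dual group action is a function $\mathfrak f$ from the arrows of $Q$ to $G$ such that, for each $l$, all paths occurring in $P_l$ have the same image $g_l$, where a path $x_p\cdots x_1$ is mapped to $\mathfrak f(x_1)\cdots\mathfrak f(x_p)$. $W$ is invariant if it has a representative in $\Lambda Q$ all of whose terms map to $1$; this representative is used to define $W^g$. The quiver $Q\# G$ has vertices $v^g$ for $v$ a vertex of $Q$ and $g\in G$, and for each arrow $x:u\to v$ of $Q$ and each $h\in G$ an arrow $x^h$ from $u^h$ to $v^{h\mathfrak f(x)}$. The lift of a path $x_k\cdots x_1$ of $Q$ by $g\in G$ is the path $x_k^{g_k}\cdots x_1^{g_1}$ of $Q\#G$ with $g_1=g$ and $g_{i+1}=g_i\mathfrak f(x_i)$ (a trivial path $\pi_v$ lifts to $\pi_{v^g}$); extended linearly this gives $\Lambda Q\to\Lambda(Q\#G)$, $P\mapsto P^g$. The ideals are completed two-sided ideals. *)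

From HB Require Import structures.
From mathcomp Require Import all_boot all_order all_fingroup all_algebra.
Set Implicit Arguments. Unset Strict Implicit. Unset Printing Implicit Defensive.
Import GRing.Theory.
Local Open Scope ring_scope.

(* A path is a pair (v, s) : V * seq E where s = [:: x_1; ...; x_p] lists the
   arrows IN TRAVERSAL ORDER (x_1 first).  In the paper's right-to-left
   notation this is the path x_p ... x_1.  (v, [::]) is the trivial path pi_v. *)

Section Quiver.
Variables (V : eqType) (E : Type) (src tgt : E -> V).

Fixpoint valid (v : V) (s : seq E) : bool :=
  if s is x :: s' then (src x == v) && valid (tgt x) s' else true.

Definition endp (v : V) (s : seq E) : V := foldl (fun _ x => tgt x) v s.

Variable k : fieldType.

(* Elements of the completed path algebra k Q: arbitrary (possibly infinite)
   formal k-linear combinations of paths, i.e. functions from paths to k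
   vanishing on non-paths. *)
Definition elem := V -> seq E -> k.

Definition supported (a : elem) : Prop :=
  forall v s, ~~ valid v s -> a v s = 0.

(* product: (a * b) at a path = sum over factorisations path = q r
   (r traversed first) of a(q) b(r); this is the product of the (completed)
   path algebra with the right-to-left convention. *)
Definition pmul (a b : elem) : elem := fun v s =>
  \sum_(i < (size s).+1) b v (take i s) * a (endp v (take i s)) (drop i s).

Definition in_ideal (I : Type) (P : I -> elem) (y : elem) : Prop :=
  exists (m : nat) (a b : 'I_m -> elem) (l : 'I_m -> I),
    (forall j, supported (a j)) /\ (forall j, supported (b j)) /\
    forall v s, y v s = \sum_(j < m) pmul (pmul (a j) (P (l j))) (b j) v s.

(* the completed two-sided ideal: closure of the ideal in the adic topology
   (x agrees with an ideal element on all paths of length < n, for every n) *)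
Definition in_cideal (I : Type) (P : I -> elem) (x : elem) : Prop :=
  forall n : nat, exists y, in_ideal P y /\
    forall v s, (size s < n)%N -> x v s = y v s.

(* the class of w is central in k Q / <P> *)
Definition central (I : Type) (P : I -> elem) (w : elem) : Prop :=
  forall x, supported x -> in_cideal P (fun v s => pmul w x v s - pmul x w v s).

End Quiver.

Section DualAction.
Variables (V E : finType) (src tgt : E -> V) (gT : finGroupType) (f : E -> gT).
Variable k : fieldType.

Definition pimg (s : seq E) : gT := foldl (fun g x => (g * f x)%g) 1%g s.

Definition formal_dual_action (I : Type) (P : I -> elem V E k) : Prop :=
  forall l, exists g : gT, forall v s, P l v s != 0 -> pimg s = g.

Definition dual_invariant (w : elem V E k) : Prop :=
  forall v s, w v s != 0 -> pimg s = 1%g.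

Definition sharp_src (xh : (E * gT)%type) : (V * gT)%type := (src xh.1, xh.2).
Definition sharp_tgt (xh : (E * gT)%type) : (V * gT)%type := (tgt xh.1, (xh.2 * f xh.1)%g).

Fixpoint lift_arrows (g : gT) (s : seq E) : seq (E * gT)%type :=
  if s is x :: s' then (x, g) :: lift_arrows (g * f x)%g s' else [::].

Definition lift_path (g : gT) (v : V) (s : seq E) : (V * gT) * seq (E * gT)%type :=
  ((v, g), lift_arrows g s).

(* linear extension P |-> P^g : the coefficient of a path q of Q#G in P^g is
   the sum of P(p) over the paths p of Q with lift p g = q; there is at most
   one such p, namely (u.1, map fst t). *)
Definition lift_elem (g : gT) (P : elem V E k) : elem (V * gT)%type (E * gT)%type k :=
  fun u t => if (u, t) == lift_path g u.1 (map fst t) then P u.1 (map fst t)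
             else 0.

Definition What (w : elem V E k) : elem (V * gT)%type (E * gT)%type k :=
  fun u t => \sum_(g : gT) lift_elem g w u t.

End DualAction.

(* Every path of Q # G starting at a vertex v^g is the lift by g of a unique
   path of Q, so an element x of Lambda(Q # G) splits into slices x_g, one for
   each starting group element, and products of lifts are lifts of products.
   Since every term of W maps to 1, multiplying by W does not change the group
   label at the end of a path, whence [What, x] = sum_g [W, x_g]^g.  Each
   [W, x_g] lies in the completed ideal of A by centrality of W, and lifting
   by g maps that ideal into the completed ideal generated by the P_i^g. *)

From mathcomp Require Import all_boot all_order all_fingroup all_algebra.
Set Implicit Arguments. Unset Strict Implicit. Unset Printing Implicit Defensive.
Import GRing.Theory.
Local Open Scope ring_scope.

Section PathAlgebra.
Variables (V : eqType) (E : Type) (src tgt : E -> V) (k : fieldType).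

Definition pcomm (a b : elem V E k) : elem V E k :=
  fun v s => pmul tgt a b v s - pmul tgt b a v s.

Lemma valid_cat v s1 s2 :
  valid src tgt v (s1 ++ s2) = valid src tgt v s1 && valid src tgt (endp tgt v s1) s2.
Proof. by elim: s1 v => [|x s1 IH] v //=; rewrite IH andbA. Qed.

Lemma pmul_supported (a b : elem V E k) :
  supported src tgt a -> supported src tgt b -> supported src tgt (pmul tgt a b).
Proof.
move=> Ha Hb v s Hs; apply: big1 => i _.
have : ~~ valid src tgt v (take i s ++ drop i s) by rewrite cat_take_drop.
by rewrite valid_cat negb_and => /orP [/Hb -> | /Ha ->]; rewrite ?mul0r ?mulr0.
Qed.

Lemma pcomm_supported (a b : elem V E k) :
  supported src tgt a -> supported src tgt b -> supported src tgt (pcomm a b).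
Proof.
by move=> Ha Hb v s Hs; rewrite /pcomm !pmul_supported ?subr0.
Qed.

Variables (I : Type) (P : I -> elem V E k).

Lemma in_ideal_ext (y y' : elem V E k) :
  (forall v s, y v s = y' v s) -> in_ideal src tgt P y -> in_ideal src tgt P y'.
Proof.
move=> eq_y [m [a [b [l [Ha [Hb Hy]]]]]].
by exists m, a, b, l; do 2!split=> //; move=> v s; rewrite -eq_y.
Qed.

Lemma in_ideal0 : in_ideal src tgt P (fun _ _ => 0).
Proof.
exists 0%N, (fun _ _ _ => 0), (fun _ _ _ => 0), (fun i : 'I_0 => match notF (ltn_ord i) with end).
by do 2!split=> //; move=> v s; rewrite big_ord0.
Qed.

Lemma in_idealD (y1 y2 : elem V E k) :
  in_ideal src tgt P y1 -> in_ideal src tgt P y2 ->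
  in_ideal src tgt P (fun v s => y1 v s + y2 v s).
Proof.
move=> [m1 [a1 [b1 [l1 [Ha1 [Hb1 Hy1]]]]]] [m2 [a2 [b2 [l2 [Ha2 [Hb2 Hy2]]]]]].
pose glue T (F1 : 'I_m1 -> T) (F2 : 'I_m2 -> T) (j : 'I_(m1 + m2)) :=
  match split j with inl i => F1 i | inr i => F2 i end.
exists (m1 + m2)%N, (glue _ a1 a2), (glue _ b1 b2), (glue _ l1 l2).
split; first by move=> j; rewrite /glue; case: (split j).
split; first by move=> j; rewrite /glue; case: (split j).
move=> v s; rewrite big_split_ord Hy1 Hy2 /glue.
congr (_ + _); apply: eq_bigr => i _.
  by rewrite -[lshift _ _]/(unsplit (inl i)) unsplitK.
by rewrite -[rshift _ _]/(unsplit (inr i)) unsplitK.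
Qed.

Lemma in_ideal_sum (J : Type) (r : seq J) (F : J -> elem V E k) :
  (forall j, in_ideal src tgt P (F j)) ->
  in_ideal src tgt P (fun v s => \sum_(j <- r) F j v s).
Proof.
move=> HF; elim: r => [|j r IH].
  by apply: in_ideal_ext in_ideal0 => v s; rewrite big_nil.
by apply: in_ideal_ext (in_idealD (HF j) IH) => v s; rewrite big_cons.
Qed.

Lemma in_ideal_generator (a b : elem V E k) l :
  supported src tgt a -> supported src tgt b ->
  in_ideal src tgt P (pmul tgt (pmul tgt a (P l)) b).
Proof.
move=> Ha Hb; exists 1%N, (fun=> a), (fun=> b), (fun=> l).
by do 2!split=> //; move=> v s; rewrite big_ord1.
Qed.

Lemma in_ideal_supported y : (forall l, supported src tgt (P l)) ->
  in_ideal src tgt P y -> supported src tgt y.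
Proof.
move=> HP [m [a [b [l [Ha [Hb Hy]]]]]] v s Hs; rewrite Hy; apply: big1 => j _.
by rewrite (pmul_supported (pmul_supported (Ha j) (HP _)) (Hb j)).
Qed.

Lemma in_cideal_ext (x x' : elem V E k) :
  (forall v s, x v s = x' v s) -> in_cideal src tgt P x -> in_cideal src tgt P x'.
Proof.
move=> eq_x Hx n; have [y [Hy Hxy]] := Hx n.
by exists y; split=> // v s Hs; rewrite -eq_x Hxy.
Qed.

Lemma in_cideal_sum (J : Type) (r : seq J) (F : J -> elem V E k) :
  (forall j, in_cideal src tgt P (F j)) ->
  in_cideal src tgt P (fun v s => \sum_(j <- r) F j v s).
Proof.
move=> HF n; elim: r => [|j r [y [Hy Hry]]].
  by exists (fun _ _ => 0); split; [exact: in_ideal0 | move=> v s _; rewrite big_nil].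
have [yj [Hyj Hjy]] := HF j n.
exists (fun v s => yj v s + y v s); split; first exact: in_idealD.
by move=> v s Hs; rewrite big_cons Hjy ?Hry.
Qed.

End PathAlgebra.

Section SmashQuiver.
Variables (V E : finType) (src tgt : E -> V) (gT : finGroupType) (f : E -> gT).
Variable k : fieldType.

Notation src' := (sharp_src src (gT:=gT)).
Notation tgt' := (sharp_tgt tgt f).
Notation lift := (lift_arrows f).
Notation elem' := (elem (V * gT)%type (E * gT)%type k).

Definition slice (x : elem') (g : gT) : elem V E k :=
  fun v s => x (v, g) (lift g s).

Lemma pimg_cons x s : pimg f (x :: s) = (f x * pimg f s)%g.
Proof.
have foldl_mulg g h t : foldl (fun g y => (g * f y)%g) (g * h)%g t =
                         (g * foldl (fun g y => (g * f y)%g) h t)%g.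
  by elim: t h => [|y t IH] h //=; rewrite -mulgA IH.
by rewrite /pimg /= -foldl_mulg mul1g mulg1.
Qed.

Lemma size_lift g s : size (lift g s) = size s.
Proof. by elim: s g => [|x s IH] g //=; rewrite IH. Qed.

Lemma map_fst_lift g s : map fst (lift g s) = s.
Proof. by elim: s g => [|x s IH] g //=; rewrite IH. Qed.

Lemma take_lift g i s : take i (lift g s) = lift g (take i s).
Proof. by elim: s g i => [|x s IH] g [|i] //=; rewrite IH. Qed.

Lemma drop_lift g i s : drop i (lift g s) = lift (g * pimg f (take i s))%g (drop i s).
Proof.
elim: s g i => [|x s IH] g [|i] //=; first by rewrite mulg1.
by rewrite IH pimg_cons mulgA.
Qed.

Lemma endp_lift v g s : endp tgt' (v, g) (lift g s) = (endp tgt v s, g * pimg f s)%g.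
Proof.
elim: s v g => [|x s IH] v g /=; first by rewrite mulg1.
by rewrite IH pimg_cons mulgA.
Qed.

Lemma valid_lift v g s : valid src' tgt' (v, g) (lift g s) = valid src tgt v s.
Proof. by elim: s v g => [|x s IH] v g //=; rewrite xpair_eqE eqxx andbT IH. Qed.

Lemma valid_liftP v g t : valid src' tgt' (v, g) t -> t = lift g (map fst t).
Proof.
elim: t v g => [|[x h] t IH] v g //=.
by rewrite /sharp_src /= xpair_eqE => /andP [/andP [_ /eqP ->] /IH <-].
Qed.

Lemma eq_on_lifts (z1 z2 : elem') :
  supported src' tgt' z1 -> supported src' tgt' z2 ->
  (forall g v s, z1 (v, g) (lift g s) = z2 (v, g) (lift g s)) ->
  forall u t, z1 u t = z2 u t.
Proof.
move=> H1 H2 eq_z [v g] t.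
have [/valid_liftP -> | /negP Ht] := boolP (valid src' tgt' (v, g) t); first exact: eq_z.
by rewrite H1 ?H2 //; apply/negP.
Qed.

Lemma lift_elem_lift g (b : elem V E k) v h s :
  lift_elem f g b (v, h) (lift h s) = if h == g then b v s else 0.
Proof.
rewrite /lift_elem /lift_path /= map_fst_lift.
have [-> | neq_hg] := eqVneq h g; first by rewrite eqxx.
by case: eqP => // [[eq_hg]]; rewrite eq_hg eqxx in neq_hg.
Qed.

Lemma sum_lift_elem_lift (F : gT -> elem V E k) v h s :
  \sum_(g : gT) lift_elem f g (F g) (v, h) (lift h s) = F h v s.
Proof.
rewrite (bigD1 h) //= lift_elem_lift eqxx big1 ?addr0 // => g neq_gh.
by rewrite lift_elem_lift eq_sym (negbTE neq_gh).
Qed.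

Lemma What_lift (a : elem V E k) v h s : What f a (v, h) (lift h s) = a v s.
Proof. exact: (sum_lift_elem_lift (fun=> a)). Qed.

Lemma lift_elem_supported g (a : elem V E k) :
  supported src tgt a -> supported src' tgt' (lift_elem f g a).
Proof.
move=> Ha [v h] t Ht; rewrite /lift_elem /lift_path /=.
by case: eqP => // [[eq_h eq_t]]; apply: Ha; rewrite -(valid_lift v g) -eq_t -eq_h.
Qed.

Lemma sum_lift_elem_supported (F : gT -> elem V E k) :
  (forall g, supported src tgt (F g)) ->
  supported src' tgt' (fun u t => \sum_(g : gT) lift_elem f g (F g) u t).
Proof. by move=> HF u t Ht; apply: big1 => g _; rewrite lift_elem_supported. Qed.

Lemma What_supported (a : elem V E k) :
  supported src tgt a -> supported src' tgt' (What f a).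
Proof. by move=> Ha u t Ht; apply: big1 => g _; rewrite lift_elem_supported. Qed.

Lemma slice_supported (x : elem') g :
  supported src' tgt' x -> supported src tgt (slice x g).
Proof. by move=> Hx v s Hs; apply: Hx; rewrite valid_lift. Qed.

Lemma pmul_lift (A B : elem') v g s :
  pmul tgt' A B (v, g) (lift g s) =
  \sum_(i < (size s).+1) B (v, g) (lift g (take i s)) *
     A (endp tgt v (take i s), g * pimg f (take i s))%g
       (lift (g * pimg f (take i s))%g (drop i s)).
Proof.
by rewrite /pmul size_lift; apply: eq_bigr => i _; rewrite take_lift drop_lift endp_lift.
Qed.

(* The lift of a P b is written as What(a) (P l)^h b^g summed over h: on a lift
   by g, What(a) and the sum over h select the correct labels automatically,
   so no compatibility of the relations with f is needed here. *)
Lemma in_ideal_lift_elem (I : Type) (P : I -> elem V E k) g y :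
  (forall l, supported src tgt (P l)) -> in_ideal src tgt P y ->
  in_ideal src' tgt' (fun gi : gT * I => lift_elem f gi.1 (P gi.2)) (lift_elem f g y).
Proof.
move=> HP Hy; have Hy_supp := in_ideal_supported HP Hy.
case: Hy => m [a [b [l [Ha [Hb Hy]]]]].
set P' := fun gi : gT * I => lift_elem f gi.1 (P gi.2).
set R := fun u t => \sum_(j < m) \sum_(h : gT)
   pmul tgt' (pmul tgt' (What f (a j)) (P' (h, l j))) (lift_elem f g (b j)) u t.
have HR : in_ideal src' tgt' P' R.
  apply: in_ideal_sum => j; apply: in_ideal_sum => h; apply: in_ideal_generator.
    exact: What_supported.
  exact: lift_elem_supported.
have HR_supp : supported src' tgt' R.
  by apply: in_ideal_supported HR => gi; apply: lift_elem_supported.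
apply: in_ideal_ext HR => u t; symmetry; apply: eq_on_lifts u t => //.
  exact: lift_elem_supported Hy_supp.
move=> h v s; rewrite lift_elem_lift /R.
have [-> | neq_hg] := eqVneq h g; last first.
  symmetry; apply: big1 => j _; apply: big1 => h' _; rewrite pmul_lift.
  by apply: big1 => i _; rewrite lift_elem_lift (negbTE neq_hg) mul0r.
rewrite Hy; apply: eq_bigr => j _.
under eq_bigr do rewrite pmul_lift.
rewrite exchange_big /=; apply: eq_bigr => i _.
rewrite lift_elem_lift eqxx -mulr_sumr; congr (_ * _).
under eq_bigr do rewrite pmul_lift.
rewrite exchange_big /=; apply: eq_bigr => i' _.
rewrite -mulr_suml What_lift; congr (_ * _).
by rewrite /P' (sum_lift_elem_lift (fun=> P (l j))).
Qed.

Lemma in_cideal_lift_elem (I : Type) (P : I -> elem V E k) g x :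
  (forall l, supported src tgt (P l)) -> in_cideal src tgt P x ->
  in_cideal src' tgt' (fun gi : gT * I => lift_elem f gi.1 (P gi.2)) (lift_elem f g x).
Proof.
move=> HP Hx n; have [y [Hy Hxy]] := Hx n.
exists (lift_elem f g y); split; first exact: in_ideal_lift_elem.
by move=> u t Ht; rewrite /lift_elem; case: ifP => // _; rewrite Hxy ?size_map.
Qed.

Lemma pcomm_What (w : elem V E k) (x : elem') :
  supported src tgt w -> dual_invariant f w -> supported src' tgt' x ->
  forall u t, pcomm tgt' (What f w) x u t =
              \sum_(g : gT) lift_elem f g (pcomm tgt w (slice x g)) u t.
Proof.
move=> Hw Hinv Hx; apply: eq_on_lifts.
  exact: pcomm_supported (What_supported Hw) Hx.
  by apply: sum_lift_elem_supported => g; apply: pcomm_supported (slice_supported g Hx).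
move=> g v s; rewrite sum_lift_elem_lift /pcomm !pmul_lift.
congr (_ - _); apply: eq_bigr => i _; rewrite !What_lift //.
have [-> | /Hinv ->] := eqVneq (w v (take i s)) 0; first by rewrite !mul0r.
by rewrite mulg1.
Qed.

End SmashQuiver.

Theorem proposition7p9 (k : fieldType) (V E : finType) (src tgt : E -> V)
  (gT : finGroupType) (f : E -> gT) (K : nat)
  (P : 'I_K -> elem V E k) (w : elem V E k) :
  (forall l, supported src tgt (P l)) ->
  formal_dual_action f P ->
  supported src tgt w ->
  dual_invariant f w ->
  central src tgt P w ->
  central (sharp_src src (gT:=gT)) (sharp_tgt tgt f)
    (fun gi : gT * 'I_K => lift_elem f gi.1 (P gi.2)) (What f w).
Proof.
move=> HP _ Hw Hinv Hcentral x Hx.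
apply: in_cideal_ext (fun u t => esym (pcomm_What Hw Hinv Hx u t)) _.
apply: in_cideal_sum => g; apply: in_cideal_lift_elem => //.
exact: Hcentral (slice_supported g Hx).
Qed.
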